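(* For any graph $G=(V,E)$, the evolution algebras $\mathcal{A}(G)$ and $\mathcal{A}_{RW}(G)$ are strongly isotopic; that is, there exist non-singular $\mathbb{R}$-linear maps $f,h:\mathcal{A}(G)\to\mathcal{A}_{RW}(G)$ such that $f(u)\cdot f(v)=h(u\cdot v)$ for all $u,v\in\mathcal{A}(G)$.
   Context: Graphs are simple (no loops or multiple edges), connected, with a countable (finite or infinite) vertex set $V$, and locally finite: $\deg(i)<\infty$ for every vertex $i$, where $\deg(i)$ is the number of neighbors of $i$. The adjacency matrix is $A=(a_{ij})$ with $a_{ij}=1$ if $i,j$ are neighbors and $0$ otherwise. An evolution algebra over $\mathbb{R}$ is an algebra with a countable basis $\{e_i\}$ (natural basis) such that $e_i\cdot e_j=0$ for $i\neq j$ and $e_i\cdot e_i=\sum_k c_{ik}e_k$. $\mathcal{A}(G)$ is the evolution algebra with natural basis $\{e_i:i\in V\}$ and $e_i\cdot e_i=\sum_{k\in V}a_{ik}e_k$, $e_i\cdot e_j=0$ for $i\ne j$. $\mathcal{A}_{RW}(G)$ is the evolution algebra with natural basis $\{e_i:i\in V\}$ and $e_i\cdot e_i=\sum_{k\in V}\frac{a_{ik}}{\deg(i)}e_k$, $e_i\cdot e_j=0$ for $i\ne j$ (the algebra of the symmetric random walk on $G$). A triple $(f,g,h)$ of non-singular linear maps $\mathcal{A}\to\mathcal{B}$ with $f(u)\cdot g(v)=h(u\cdot v)$ for all $u,v$ is an isotopism; it is a strong isotopism if $f=g$. *)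

From HB Require Import structures.
From mathcomp Require Import all_boot all_order all_algebra.
From mathcomp Require Import boolp classical_sets fsbigop.
From mathcomp Require Import reals Rstruct.
From Stdlib Require Import Rdefinitions.
Set Implicit Arguments. Unset Strict Implicit. Unset Printing Implicit Defensive.
Import Order.TTheory GRing.Theory Num.Theory.
Local Open Scope ring_scope.
Local Open Scope classical_set_scope.

Definition simple_graph (V : Type) (adj : rel V) : Prop :=
  (forall i j, adj i j = adj j i) /\ (forall i, ~~ adj i i).

Definition connected_graph (V : Type) (adj : rel V) : Prop :=
  forall i j : V, exists p : seq V, path adj i p /\ last i p = j.

Definition locally_finite (V : eqType) (adj : rel V) : Prop :=
  forall i : V, exists s : seq V, forall j, adj i j -> j \in s.

Definition is_graph (V : countType) (adj : rel V) : Prop :=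
  [/\ simple_graph adj, connected_graph adj & locally_finite adj].

Definition deg (V : countType) (adj : rel V) (i : V) : nat :=
  (\sum_(j \in [set: V]) (adj i j : nat))%N.

Definition adjmx (V : countType) (adj : rel V) (i k : V) : R :=
  (adj i k)%:R.

Definition rwmx (V : countType) (adj : rel V) (i k : V) : R :=
  (adj i k)%:R / (deg adj i)%:R.

(* Elements of an evolution algebra with natural basis {e_i : i in V}:
   finitely supported coordinate functions V -> R. *)
Definition finsupp (V : countType) (u : V -> R) : Prop :=
  exists s : seq V, forall i, i \notin s -> u i = 0.

(* Product of the evolution algebra with structure constants c:
   e_i e_i = sum_k c i k e_k, e_i e_j = 0 (i <> j); hence
   (u v)_k = sum_i u_i v_i c_ik. *)
Definition evo_mul (V : countType) (c : V -> V -> R) (u v : V -> R) : V -> R :=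
  fun k => \sum_(i \in [set: V]) (u i * v i * c i k).

Definition nonsingular_linear (V : countType) (f : (V -> R) -> (V -> R)) : Prop :=
  [/\ (forall u, finsupp u -> finsupp (f u)),
      (forall (a : R) u v, finsupp u -> finsupp v ->
         f (fun k => a * u k + v k) = (fun k => a * f u k + f v k)),
      (forall u v, finsupp u -> finsupp v -> f u = f v -> u = v) &
      (forall w, finsupp w -> exists2 u, finsupp u & f u = w)].

Definition strongly_isotopic (V : countType) (c d : V -> V -> R) : Prop :=
  exists f h : (V -> R) -> (V -> R),
    [/\ nonsingular_linear f, nonsingular_linear h &
        forall u v, finsupp u -> finsupp v ->
          evo_mul d (f u) (f v) = h (evo_mul c u v)].

(* Rescaling the natural basis by e_i |-> sqrt(deg i) e_i multiplies the
   structure constants of row i by deg i, which turns the random-walk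
   constants a_ik / deg i back into a_ik.  So (f, f, id) with f the diagonal
   map u_i |-> sqrt(deg i) u_i is a strong isotopism. *)
From mathcomp Require Import all_boot all_order all_algebra.
From mathcomp Require Import boolp classical_sets fsbigop reals Rstruct cardinality ring.
From Stdlib Require Import Rdefinitions.
Import Order.TTheory GRing.Theory Num.Theory.
Local Open Scope ring_scope.
Local Open Scope classical_set_scope.

Section DiagonalRescaling.
Variable V : countType.

Definition diag_scale (s : V -> R) (u : V -> R) : V -> R := fun i => s i * u i.

Lemma nonsingular_linear_id : nonsingular_linear (@id (V -> R)).
Proof. by split=> // w fw; exists w. Qed.

Lemma nonsingular_linear_diag_scale (s : V -> R) :
  (forall i, s i != 0) -> nonsingular_linear (diag_scale s).
Proof.
move=> s_neq0; split.
- by move=> u [l ul]; exists l => i /ul; rewrite /diag_scale => ->; rewrite mulr0.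
- by move=> a u v _ _; apply: funext => k; rewrite /diag_scale mulrDr mulrCA.
- move=> u v _ _ suv; apply: funext => k; apply: (mulfI (s_neq0 k)).
  by rewrite -!/(diag_scale s _ k) suv.
- move=> w [l wl]; exists (fun i => w i / s i).
    by exists l => i /wl ->; rewrite mul0r.
  by apply: funext => k; rewrite /diag_scale mulrC divfK.
Qed.

Lemma evo_mul_diag_scale (s : V -> R) (c d : V -> V -> R) (u v : V -> R) :
  (forall i k, c i k = s i ^+ 2 * d i k) ->
  evo_mul d (diag_scale s u) (diag_scale s v) = evo_mul c u v.
Proof.
move=> cd; apply: funext => k; apply: eq_fsbigr => i _.
by rewrite /diag_scale cd expr2; ring.
Qed.

Lemma strongly_isotopic_diag_scale (s : V -> R) (c d : V -> V -> R) :
  (forall i, s i != 0) -> (forall i k, c i k = s i ^+ 2 * d i k) ->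
  strongly_isotopic c d.
Proof.
move=> s_neq0 cd; exists (diag_scale s), id; split.
- exact: nonsingular_linear_diag_scale.
- exact: nonsingular_linear_id.
- by move=> u v _ _; exact: evo_mul_diag_scale.
Qed.

End DiagonalRescaling.

Lemma deg_eq0_adj (V : countType) (adj : rel V) (i k : V) :
  locally_finite adj -> deg adj i = 0%N -> adj i k = false.
Proof.
move=> lf /eqP; apply: contraTF => aik.
have [s nbrs_s] := lf i.
rewrite /deg fsbig_supp.
set S := (X in \big[_/_]_(j \in X) _).
have finS : finite_set S.
  apply: (sub_finite_set _ (finite_seq s)) => j [_ /=].
  by case: (adj i j) (nbrs_s j) => //= ->.
have Sk : S k by split => //=; rewrite aik.
by rewrite (fsbigD1 k S) //= aik.
Qed.

(* An isolated vertex has deg 0 and rwmx = 0 on its row (x / 0 = 0); using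
   max(deg, 1) keeps the scale nonzero there. *)
Lemma adjmx_rwmx (V : countType) (adj : rel V) (i k : V) :
  locally_finite adj ->
  adjmx adj i k = (maxn (deg adj i) 1)%:R * rwmx adj i k.
Proof.
move=> lf; rewrite /adjmx /rwmx RdivE.
have [deg0 | deg_neq0] := eqVneq (deg adj i) 0%N.
  by rewrite (deg_eq0_adj _ _ _ k lf deg0) /= mulr0n mul0r mulr0.
by rewrite (maxn_idPl _) ?lt0n // mulrC divfK // pnatr_eq0.
Qed.

Theorem theorem2p2 (V : countType) (adj : rel V) :
  is_graph adj -> strongly_isotopic (adjmx adj) (rwmx adj).
Proof.
case=> _ _ lf.
pose m i : R := (maxn (deg adj i) 1)%:R.
have m_gt0 i : 0 < m i by rewrite ltr0n leq_max orbT.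
apply: (@strongly_isotopic_diag_scale _ (fun i => Num.sqrt (m i))).
- by move=> i; rewrite gt_eqF // sqrtr_gt0.
- by move=> i k; rewrite sqr_sqrtr ?ltW ?m_gt0 // (adjmx_rwmx _ _ _ _ lf).
Qed.
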